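(* Let $d\ge 1$, $\mathbf{n}=(n_1,\ldots,n_d)$ be positive integers, and let $\mathbf{M}=\{\mathbf{m}^{(1)},\ldots,\mathbf{m}^{(d)}\}$ be a blocking of $\mathcal{A}\in\mathbb{R}^{n_1\times\cdots\times n_d}$ with $\mathbf{m}^{(k)}=[m^{(k)}_1,\ldots,m^{(k)}_{b_k}]$ for $k=1,\ldots,d$, and write $\mathbf{b}=(b_1,\ldots,b_d)$. For $k=1,\ldots,d$ set $N_k=n_1\cdots n_k$ and $\mathbf{M}_k=\{\mathbf{m}^{(1)},\ldots,\mathbf{m}^{(k)}\}$ (a blocking of tensors of size $n_1\times\cdots\times n_k$), and define \[ Q_k=\begin{cases} I_{N_d} & k=1,\\ I_{N_d/N_k}\otimes \Gamma^{(k)} & 1<k\le d,\end{cases} \] where $N_d/N_k=n_{k+1}\cdots n_d$, $\Gamma^{(k)}=\mathrm{diag}(\Gamma^{(k)}_1,\ldots,\Gamma^{(k)}_{b_k})$, and \[ \Gamma^{(k)}_j=\mathrm{diag}\big(\ldots,\Pi_{\mathrm{vol}_{\mathbf{M}_{k-1}}(\mathbf{i}),\,m^{(k)}_j},\ldots\big)\cdot \Pi_{m^{(k)}_j,\,N_{k-1}}, \] the block diagonal matrix having one diagonal block for each multi-index $\mathbf{1}\le\mathbf{i}\le\mathbf{b}(1:k-1)$, with the diagonal blocks ordered by increasing $\mathrm{ivec}(\mathbf{i},\mathbf{b}(1:k-1))$. Then the permutation matrix $P_{\mathbf{M}}=Q_dQ_{d-1}\cdots Q_2Q_1$ satisfies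 \[ \mathrm{vec}_{\mathbf{M}}(\mathcal{A})=P_{\mathbf{M}}\,\mathrm{vec}(\mathcal{A}). \]
   Context: Multi-index conventions: for integer vectors $\mathbf{i},\mathbf{j}$ of equal length, $\mathbf{i}\le\mathbf{j}$ means componentwise; $\mathbf{1}$ is the all-ones vector; $\mathbf{b}(1:k-1)=(b_1,\ldots,b_{k-1})$. For $\mathbf{n}=(n_1,\ldots,n_d)$ and $\mathbf{1}\le\mathbf{i}\le\mathbf{n}$, $\mathrm{ivec}(\mathbf{i},\mathbf{n})=i_1+(i_2-1)n_1+(i_3-1)n_1n_2+\cdots+(i_d-1)n_1\cdots n_{d-1}$. For $\mathcal{A}\in\mathbb{R}^{n_1\times\cdots\times n_d}$, $\mathrm{vec}(\mathcal{A})\in\mathbb{R}^{n_1\cdots n_d}$ is the column vector with entry $\mathrm{ivec}(\mathbf{i},\mathbf{n})$ equal to $\mathcal{A}(\mathbf{i})$ (for matrices, it stacks columns). Perfect shuffle: for positive integers $q,r$ and $s=qr$, $\Pi_{q,r}\in\mathbb{R}^{s\times s}$ is the permutation matrix with $\Pi_{q,r}z=[z(1:r:s);z(2:r:s);\ldots;z(r:r:s)]$ for $z\in\mathbb{R}^s$, where $a:c:b$ denotes $a,a+c,a+2c,\ldots$ up to $b$. $\otimes$ is the Kronecker product and $\mathrm{diag}(\cdot)$ the block diagonal matrix. A blocking of $\mathcal{A}\in\mathbb{R}^{n_1\times\cdots\times n_d}$ is a collection $\mathbf{M}=\{\mathbf{m}^{(1)},\ldots,\mathbf{m}^{(d)}\}$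 where $\mathbf{m}^{(k)}=[m^{(k)}_1,\ldots,m^{(k)}_{b_k}]$ is a vector of positive integers summing to $n_k$. With $\ell^{(k)}_j=m^{(k)}_1+\cdots+m^{(k)}_{j-1}+1$ and $u^{(k)}_j=m^{(k)}_1+\cdots+m^{(k)}_j$, the block $\mathbf{i}$ ($\mathbf{1}\le\mathbf{i}\le\mathbf{b}$) is $\mathcal{A}_{\mathbf{i}}=\mathcal{A}(\ell^{(1)}_{i_1}:u^{(1)}_{i_1},\ldots,\ell^{(d)}_{i_d}:u^{(d)}_{i_d})$, and $\mathrm{vol}_{\mathbf{M}}(\mathbf{i})=m^{(1)}_{i_1}\cdots m^{(d)}_{i_d}$ (for $\mathbf{M}_0$, the empty blocking, $\mathrm{vol}=1$ and $N_0=1$). $\mathrm{vec}_{\mathbf{M}}(\mathcal{A})$ is the vector obtained by stacking $\mathrm{vec}(\mathcal{A}_{\mathbf{i}})$ over all $\mathbf{1}\le\mathbf{i}\le\mathbf{b}$, in order of increasing $\mathrm{ivec}(\mathbf{i},\mathbf{b})$. *)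

(* All indices below are 0-based. *)
From mathcomp Require Import all_boot all_order all_algebra.
Set Implicit Arguments. Unset Strict Implicit. Unset Printing Implicit Defensive.
Import GRing.Theory.
Local Open Scope ring_scope.

Definition Nprod (n : nat -> nat) (k : nat) : nat := (\prod_(j < k) n j)%N.

Definition ivec (n : nat -> nat) (i : seq nat) : nat :=
  (\sum_(k < size i) nth 0 i k * Nprod n k)%N.

(* the multi-index (of length k) with ivec equal to p, p < Nprod n k
   (mixed-radix digits of p); it enumerates multi-indices in order of
   increasing ivec *)
Definition idecode (n : nat -> nat) (k p : nat) : seq nat :=
  mkseq (fun j => (p %/ Nprod n j) %% n j)%N k.

(* a blocking is m : nat -> seq nat, m k = [m^(k)_0, ..., m^(k)_(b_k - 1)] *)
Definition bcount (m : nat -> seq nat) : nat -> nat := fun k => size (m k).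

Definition vol (m : nat -> seq nat) (i : seq nat) : nat :=
  (\prod_(k < size i) nth 0 (m k) (nth 0 i k))%N.

Fixpoint blk (s : seq nat) (x : nat) : nat * nat :=
  match s with
  | [::] => (0%N, x)
  | a :: s' => if (x < a)%N then (0%N, x)
               else let jr := blk s' (x - a) in (jr.1.+1, jr.2)
  end.

Definition blkidx (m : nat -> seq nat) (g : seq nat) : seq nat :=
  [seq (blk (m k) (nth 0 g k)).1 | k <- iota 0 (size g)].
Definition blkoff (m : nat -> seq nat) (g : seq nat) : seq nat :=
  [seq (blk (m k) (nth 0 g k)).2 | k <- iota 0 (size g)].

(* position of entry A(g) in vec_M(A): the total volume of the blocks
   preceding block beta (in ivec(., b) order), plus the position of the
   local offset inside vec(A_beta) *)
Definition posM (m : nat -> seq nat) (g : seq nat) : nat :=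
  let beta := blkidx m g in
  ((\sum_(t < ivec (bcount m) beta) vol m (idecode (bcount m) (size g) t))
   + ivec (fun k => nth 0 (m k) (nth 0 beta k)) (blkoff m g))%N.

Section Vec.
Variable R : pzRingType.

(* vec(A): entry ivec(i, n) is A(i) *)
Definition tvec (d : nat) (n : nat -> nat) (A : seq nat -> R) : 'cV[R]_(Nprod n d) :=
  \col_(p < Nprod n d) A (idecode n d p).

(* vec_M(A): stacking of vec(A_beta); entry posM(g) is A(g) *)
Definition tvecM (d : nat) (n : nat -> nat) (m : nat -> seq nat)
    (A : seq nat -> R) : 'cV[R]_(Nprod n d) :=
  \col_(p < Nprod n d)
     \sum_(q < Nprod n d) ((posM m (idecode n d q) == p)%:R * A (idecode n d q)).

Record smx := Smx { msz : nat; ment : nat -> nat -> R }.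

Definition mid (s : nat) : smx :=
  Smx s (fun o i => ((o < s)%N && (o == i))%:R).

Definition mmul (A B : smx) : smx :=
  Smx (msz A) (fun o i => \sum_(t < msz A) ment A o t * ment B t i).

Definition mshuffle (q r : nat) : smx :=
  Smx (q * r) (fun o i =>
    [&& (o < q * r)%N, (i < q * r)%N & (i == (o %% q) * r + o %/ q)%N]%:R).

Definition mkron_id (a : nat) (G : smx) : smx :=
  let s := msz G in
  Smx (a * s) (fun o i =>
    if [&& (o < a * s)%N, (i < a * s)%N & (o %/ s == i %/ s)%N]
    then ment G (o %% s) (i %% s) else 0).

Fixpoint mbdiag (l : seq smx) : smx :=
  match l with
  | [::] => Smx 0 (fun _ _ => 0)
  | G :: l' =>
      let D := mbdiag l' in
      let s := msz G in
      Smx (s + msz D) (fun o i =>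
        if (o < s)%N then (if (i < s)%N then ment G o i else 0)
        else if (s <= i)%N then ment D (o - s) (i - s) else 0)
  end.

Definition tomx (s : nat) (P : smx) : 'M[R]_s := \matrix_(o < s, i < s) ment P o i.

(* ---------- the factors Q_k (0-based mode k, i.e. paper's Q_(k+1)) ---------- *)
Definition Gammaj (n : nat -> nat) (m : nat -> seq nat) (k j : nat) : smx :=
  let mj := nth 0 (m k) j in
  mmul (mbdiag [seq mshuffle (vol m (idecode (bcount m) k t)) mj
               | t <- iota 0 (Nprod (bcount m) k)])
       (mshuffle mj (Nprod n k)).

Definition Gamma (n : nat -> nat) (m : nat -> seq nat) (k : nat) : smx :=
  mbdiag [seq Gammaj n m k j | j <- iota 0 (size (m k))].

Definition Qk (d : nat) (n : nat -> nat) (m : nat -> seq nat) (k : nat) : smx :=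
  if k == 0%N then mid (Nprod n d)
  else mkron_id (\prod_(k.+1 <= j < d) n j)%N (Gamma n m k).

Fixpoint prodQ (d : nat) (n : nat -> nat) (m : nat -> seq nat) (k : nat) : smx :=
  match k with
  | 0 => mid (Nprod n d)
  | 1 => Qk d n m 0
  | k'.+1 => mmul (Qk d n m k') (prodQ d n m k')
  end.

Definition PM (d : nat) (n : nat -> nat) (m : nat -> seq nat) : smx := prodQ d n m d.

End Vec.

Arguments tvec {R} d n A.
Arguments tvecM {R} d n m A.
Arguments mid {R} s.
Arguments mshuffle {R} q r.
Arguments Gammaj {R} n m k j.
Arguments Gamma {R} n m k.
Arguments Qk {R} d n m k.
Arguments prodQ {R} d n m k.
Arguments PM {R} d n m.
Arguments tomx {R} s P.

From mathcomp Require Import all_boot all_order all_algebra.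
From mathcomp Require Import zify.
Set Implicit Arguments. Unset Strict Implicit. Unset Printing Implicit Defensive.
Import GRing.Theory.

(* Each [Q_k] is a permutation matrix, so it suffices to follow the unit vector
   of every index through the factors.  Invariant: after [Q_k ... Q_1] the entry
   with multi-index [g] sits at [posM(g_1..g_k) + N_k * ivec(g_(k+1)..g_d)], i.e.
   every mode-[(k+1..d)] slice of [vec A] has been replaced by its [vec_(M_k)].
   Inside a slice of length [N_(k+1)], [Pi_(m_j, N_k)] interleaves the [m_j]
   consecutive [vec_(M_k)]-vectors that make up block [j] of mode [k+1], and the
   diagonal shuffle [Pi_(vol i, m_j)] then reorders each interleaved block into
   [vec] of the enlarged block, in which the new coordinate is the slowest one. *)

Local Open Scope nat_scope.

Lemma divnMD_small q u v : 0 < q -> v < q -> (u * q + v) %/ q = u.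
Proof. by move=> q_gt0 lt_vq; rewrite divnMDl // divn_small // addn0. Qed.

Lemma modnMD_small q u v : v < q -> (u * q + v) %% q = v.
Proof. by move=> lt_vq; rewrite modnMDl modn_small. Qed.

Lemma mixed_lt q r u v : u < q -> v < r -> u * r + v < q * r.
Proof. by move=> lt_uq lt_vr; nia. Qed.

Lemma Nprod0 c : Nprod c 0 = 1.
Proof. by rewrite /Nprod big_ord0. Qed.

Lemma NprodS c k : Nprod c k.+1 = Nprod c k * c k.
Proof. by rewrite /Nprod big_ord_recr. Qed.

Lemma Nprod_gt0 c k : (forall l, l < k -> 0 < c l) -> 0 < Nprod c k.
Proof.
elim: k => [|k IH] c_gt0; first by rewrite Nprod0.
by rewrite NprodS muln_gt0 c_gt0 // IH // => l /ltnW; apply: c_gt0.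
Qed.

Lemma eq_Nprod c c' k : (forall l, l < k -> c l = c' l) -> Nprod c k = Nprod c' k.
Proof. by move=> eq_c; apply: eq_bigr => l _; apply: eq_c. Qed.

Lemma dvdn_Nprod c j k : j <= k -> Nprod c j %| Nprod c k.
Proof.
elim: k => [|k IH]; first by rewrite leqn0 => /eqP ->.
rewrite leq_eqVlt => /orP [/eqP -> // | lt_jk].
by rewrite NprodS dvdn_mulr // IH.
Qed.

Lemma Nprod_split c k d : k < d -> Nprod c d = \prod_(k.+1 <= j < d) c j * Nprod c k.+1.
Proof.
move=> lt_kd; rewrite /Nprod -!(big_mkord xpredT) (big_cat_nat (leq0n k.+1) lt_kd).
by rewrite mulnC.
Qed.

Lemma size_idecode c k p : size (idecode c k p) = k.
Proof. by rewrite size_mkseq. Qed.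

Lemma idecodeS c k p :
  idecode c k.+1 p = rcons (idecode c k p) ((p %/ Nprod c k) %% c k).
Proof. by rewrite /idecode mkseqS. Qed.

Section MixedRadix.
Variables (c : nat -> nat) (k : nat).
Hypothesis c_gt0 : forall l, l < k -> 0 < c l.

Lemma idecodeDM p a : idecode c k (p + Nprod c k * a) = idecode c k p.
Proof.
apply/eq_in_map => l; rewrite mem_iota add0n => lt_lk.
have Nl_gt0 : 0 < Nprod c l by apply: Nprod_gt0 => l' lt_l'; apply/c_gt0/(ltn_trans lt_l' lt_lk).
have /dvdnP [X ->] : Nprod c l.+1 %| Nprod c k by apply: dvdn_Nprod.
have -> : p + X * Nprod c l.+1 * a = X * a * c l * Nprod c l + p by rewrite NprodS; nia.
by rewrite divnMDl // modnMDl.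
Qed.

Lemma idecode_rcons t j : t < Nprod c k -> j < c k ->
  idecode c k.+1 (t + Nprod c k * j) = rcons (idecode c k t) j.
Proof.
move=> lt_t lt_j; rewrite idecodeS idecodeDM; congr rcons.
by rewrite addnC mulnC divnMD_small ?modn_small // (leq_ltn_trans _ lt_t).
Qed.

End MixedRadix.

Lemma ivec_rcons c s a : ivec c (rcons s a) = ivec c s + a * Nprod c (size s).
Proof.
rewrite /ivec size_rcons big_ord_recr /= nth_rcons ltnn eqxx; congr (_ + _).
by apply: eq_bigr => i _; rewrite nth_rcons ltn_ord.
Qed.

Lemma eq_ivec c c' s : (forall l, l < size s -> c l = c' l) -> ivec c s = ivec c' s.
Proof.
move=> eq_c; apply: eq_bigr => i _; congr (_ * _).
by apply: eq_Nprod => l lt_l; apply/eq_c/(ltn_trans lt_l).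
Qed.

Definition digits_lt (c : nat -> nat) (s : seq nat) :=
  forall l, l < size s -> nth 0 s l < c l.

Lemma digits_lt_rcons c s a :
  digits_lt c (rcons s a) -> digits_lt c s /\ a < c (size s).
Proof.
move=> lt_sa; split; last by move: (lt_sa (size s)); rewrite size_rcons nth_rcons ltnn eqxx; apply.
by move=> l lt_l; move: (lt_sa l); rewrite size_rcons nth_rcons lt_l; apply; apply: ltnW.
Qed.

Lemma ivec_lt c s : digits_lt c s -> ivec c s < Nprod c (size s).
Proof.
elim/last_ind: s => [|s a IH]; first by rewrite /ivec big_ord0 Nprod0.
move=> /digits_lt_rcons [/IH lt_s lt_a].
by rewrite ivec_rcons size_rcons NprodS addnC [Nprod c _ * _]mulnC mixed_lt.
Qed.

Lemma idecode_ivec c s : digits_lt c s -> idecode c (size s) (ivec c s) = s.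
Proof.
elim/last_ind: s => [|s a IH] // /digits_lt_rcons [lt_s lt_a].
rewrite ivec_rcons size_rcons mulnC idecode_rcons ?IH ?ivec_lt //.
by move=> l lt_l; apply: leq_ltn_trans (lt_s l lt_l).
Qed.

Lemma sumn_take s j : sumn (take j s) = \sum_(i < j) nth 0 s i.
Proof.
elim: s j => [|a s IH] [|j]; rewrite ?big_ord0 //=.
  by rewrite big1 // => i _; rewrite nth_nil.
by rewrite big_ord_recl /= IH.
Qed.

Lemma sumn_map_iota (f : nat -> nat) p : sumn [seq f t | t <- iota 0 p] = \sum_(t < p) f t.
Proof.
elim: p => [|p IH]; first by rewrite big_ord0.
have -> : iota 0 p.+1 = iota 0 p ++ [:: p] by rewrite -addn1 iotaD.
by rewrite big_ord_recr -IH map_cat sumn_cat /= addn0.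
Qed.

Lemma sumn_take_iota (f : nat -> nat) j p : j <= p ->
  sumn (take j [seq f t | t <- iota 0 p]) = \sum_(t < j) f t.
Proof. by move=> le_jp; rewrite -map_take take_iota (minn_idPl le_jp) sumn_map_iota. Qed.

Lemma blk_spec s x : x < sumn s ->
  [/\ (blk s x).1 < size s, (blk s x).2 < nth 0 s (blk s x).1
    & x = sumn (take (blk s x).1 s) + (blk s x).2].
Proof.
elim: s x => [|a s IH] x //= lt_x; case: ifP => lt_xa /=; first by rewrite add0n.
have le_ax : a <= x by rewrite leqNgt lt_xa.
have [lt_j lt_off eq_x] : _ := IH (x - a) ltac:(by rewrite ltn_subLR).
by split=> //; rewrite -addnA -eq_x subnKC.
Qed.

Lemma vol_rcons m s a : vol m (rcons s a) = vol m s * nth 0 (m (size s)) a.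
Proof.
rewrite /vol size_rcons big_ord_recr /= nth_rcons ltnn eqxx; congr (_ * _).
by apply: eq_bigr => i _; rewrite nth_rcons ltn_ord.
Qed.

Lemma size_blkidx m g : size (blkidx m g) = size g.
Proof. by rewrite size_map size_iota. Qed.

Lemma size_blkoff m g : size (blkoff m g) = size g.
Proof. by rewrite size_map size_iota. Qed.

Lemma nth_blkidx m g l : l < size g -> nth 0 (blkidx m g) l = (blk (m l) (nth 0 g l)).1.
Proof. by move=> lt_l; rewrite (nth_map 0) ?size_iota // nth_iota. Qed.

Lemma nth_blkoff m g l : l < size g -> nth 0 (blkoff m g) l = (blk (m l) (nth 0 g l)).2.
Proof. by move=> lt_l; rewrite (nth_map 0) ?size_iota // nth_iota. Qed.

Lemma blkidx_rcons m h x :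
  blkidx m (rcons h x) = rcons (blkidx m h) (blk (m (size h)) x).1.
Proof.
rewrite /blkidx size_rcons -addn1 iotaD map_cat /= cats1 add0n nth_rcons ltnn eqxx.
by congr rcons; apply/eq_in_map => l; rewrite mem_iota add0n /= => lt_l; rewrite nth_rcons lt_l.
Qed.

Lemma blkoff_rcons m h x :
  blkoff m (rcons h x) = rcons (blkoff m h) (blk (m (size h)) x).2.
Proof.
rewrite /blkoff size_rcons -addn1 iotaD map_cat /= cats1 add0n nth_rcons ltnn eqxx.
by congr rcons; apply/eq_in_map => l; rewrite mem_iota add0n /= => lt_l; rewrite nth_rcons lt_l.
Qed.

Section Blocking.
Variables (D : nat) (n : nat -> nat) (m : nat -> seq nat).
Hypothesis n_gt0 : forall l, l < D -> 0 < n l.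
Hypothesis sumn_m : forall l, l < D -> sumn (m l) = n l.

Local Notation b := (bcount m).

Lemma bcount_gt0 l : l < D -> 0 < b l.
Proof. by move=> lt_l; move: (n_gt0 lt_l); rewrite -sumn_m // /bcount; case: (m l). Qed.

Definition vol_before k p := \sum_(t < p) vol m (idecode b k t).

Definition local_pos h :=
  ivec (fun l => nth 0 (m l) (nth 0 (blkidx m h) l)) (blkoff m h).

Lemma posME h : posM m h = vol_before (size h) (ivec b (blkidx m h)) + local_pos h.
Proof. by []. Qed.

Definition is_index h := size h <= D /\ digits_lt n h.

Lemma is_index_idecode k p : k <= D -> is_index (idecode n k p).
Proof.
move=> le_kD; split; first by rewrite size_idecode.
move=> l; rewrite size_idecode => lt_lk; rewrite nth_mkseq // ltn_mod n_gt0 //.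
exact: leq_trans lt_lk le_kD.
Qed.

(* The blocks of ivec-rank below [b_0 ... b_(k-1) * j + r] are the [j] full
   layers of mode [k] followed by [r] blocks of layer [j]. *)
Lemma vol_before_split k j r : k < D -> j < b k -> r <= Nprod b k ->
  vol_before k.+1 (Nprod b k * j + r)
    = vol_before k.+1 (Nprod b k * j) + vol_before k r * nth 0 (m k) j.
Proof.
move=> lt_kD lt_j le_r; rewrite /vol_before big_split_ord /= big_distrl; congr (_ + _).
apply: eq_bigr => t _; rewrite addnC idecode_rcons ?vol_rcons ?size_idecode //.
- by move=> l lt_lk; apply/bcount_gt0/(ltn_trans lt_lk).
- exact: leq_trans (ltn_ord t) le_r.
Qed.

Lemma vol_before_layers k j : k < D -> j <= b k ->
  vol_before k.+1 (Nprod b k * j) = vol_before k (Nprod b k) * sumn (take j (m k)).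
Proof.
move=> lt_kD; elim: j => [|j IH] lt_j; first by rewrite muln0 /vol_before big_ord0 take0 muln0.
by rewrite mulnS addnC vol_before_split // IH ?(ltnW lt_j) // (take_nth 0) // sumn_rcons mulnDr.
Qed.

Lemma vol_before_all k : k <= D -> vol_before k (Nprod b k) = Nprod n k.
Proof.
elim: k => [|k IH] le_kD; first by rewrite /vol_before Nprod0 big_ord1 Nprod0 /vol big_ord0.
rewrite NprodS vol_before_layers // IH ?(ltnW le_kD) //.
by rewrite /bcount take_size sumn_m // NprodS.
Qed.

Lemma vol_before_mono k p q : p <= q -> vol_before k p <= vol_before k q.
Proof. by move=> /subnKC <-; rewrite /vol_before big_split_ord /= leq_addr. Qed.

Lemma blk_digits h l : is_index h -> l < size h ->
  nth 0 (blkidx m h) l < b l /\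
  nth 0 (blkoff m h) l < nth 0 (m l) (nth 0 (blkidx m h) l).
Proof.
move=> [le_hD lt_h] lt_l.
have : nth 0 h l < sumn (m l) by rewrite sumn_m ?lt_h // (leq_trans lt_l).
by move/blk_spec => [? ? _]; rewrite nth_blkidx // nth_blkoff.
Qed.

Lemma digits_lt_blkidx h : is_index h -> digits_lt b (blkidx m h).
Proof. by move=> h_idx l; rewrite size_blkidx => /(blk_digits h_idx) []. Qed.

Lemma ivec_blkidx_lt h : is_index h -> ivec b (blkidx m h) < Nprod b (size h).
Proof. by move=> /digits_lt_blkidx /ivec_lt; rewrite size_blkidx. Qed.

Lemma local_pos_lt h : is_index h -> local_pos h < vol m (blkidx m h).
Proof.
move=> h_idx; rewrite /local_pos /vol size_blkidx -(size_blkoff m h).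
by apply: ivec_lt => l; rewrite size_blkoff => /(blk_digits h_idx) [].
Qed.

Lemma vol_idecode_blkidx h : is_index h ->
  vol m (idecode b (size h) (ivec b (blkidx m h))) = vol m (blkidx m h).
Proof. by move=> /digits_lt_blkidx /idecode_ivec; rewrite size_blkidx => ->. Qed.

Lemma posM_lt h : is_index h -> posM m h < Nprod n (size h).
Proof.
move=> h_idx; rewrite posME -vol_before_all; last exact: h_idx.1.
apply: (@leq_trans (vol_before (size h) (ivec b (blkidx m h)).+1)).
  by rewrite /vol_before big_ord_recr /= vol_idecode_blkidx // ltn_add2l local_pos_lt.
exact/vol_before_mono/ivec_blkidx_lt.
Qed.

(* The three summands: the [j] preceding mode-[k] layers, the preceding blocks
   of layer [j], and the position inside the block, where the new coordinate
   [x] (at offset [off] in block [j]) is the slowest one. *)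
Lemma posM_rcons h x : is_index h -> size h < D -> x < n (size h) ->
  let k := size h in let j := (blk (m k) x).1 in let off := (blk (m k) x).2 in
  posM m (rcons h x) =
    Nprod n k * sumn (take j (m k))
    + (vol_before k (ivec b (blkidx m h)) * nth 0 (m k) j
       + (off * vol m (blkidx m h) + local_pos h)).
Proof.
move=> h_idx lt_hD lt_x k j off.
have [lt_j _ _] : _ := @blk_spec (m k) x ltac:(by rewrite sumn_m).
rewrite posME size_rcons blkidx_rcons ivec_rcons size_blkidx [_ * Nprod b _]mulnC [ivec b _ + _]addnC.
rewrite vol_before_split ?(ltnW (ivec_blkidx_lt h_idx)) //.
rewrite vol_before_layers ?(ltnW lt_j) // vol_before_all ?(ltnW lt_hD) // -addnA.
congr (_ + (_ + _)).
rewrite /local_pos blkidx_rcons blkoff_rcons ivec_rcons size_blkoff addnC; congr (_ + _).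
- congr (_ * _); rewrite /vol size_blkidx; apply: eq_bigr => l _.
  by rewrite nth_rcons size_blkidx ltn_ord.
- apply: eq_ivec => l; rewrite size_blkoff -(size_blkidx m h) => lt_l.
  by rewrite nth_rcons lt_l.
Qed.

Lemma posM_singleton x : 0 < D -> x < n 0 -> posM m [:: x] = x.
Proof.
move=> D_gt0 lt_x; have := @posM_rcons [::] x (is_index_idecode 0 (leq0n D)) D_gt0 lt_x.
rewrite /= Nprod0 mul1n /vol_before /local_pos /ivec /vol !big_ord0 !mul0n muln1 !addn0 => ->.
by have [_ _ <-] := @blk_spec (m 0) x ltac:(by rewrite sumn_m).
Qed.

End Blocking.

Section UnitColumns.
Variable R : pzRingType.

(* Only the rows below [msz M] are constrained: [ment M] is a total function. *)
Definition unit_col (M : smx R) (i y : nat) :=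
  y < msz M /\ forall o, o < msz M -> ment M o i = ((y == o)%:R)%R.

Lemma unit_col_mid s i : i < s -> unit_col (mid s) i i.
Proof. by move=> lt_is; split => // o /= ->; rewrite eq_sym. Qed.

Lemma unit_col_mmul (A B : smx R) i y z : msz A = msz B ->
  unit_col B i y -> unit_col A y z -> unit_col (mmul A B) i z.
Proof.
move=> eq_sz [lt_yB colB] [lt_zA colA]; split => // o lt_o /=.
have lt_yA : y < msz A by rewrite eq_sz.
rewrite (bigD1 (Ordinal lt_yA)) //= colB // eqxx mulr1 colA // big1 ?addr0 // => t ne_ty.
rewrite colB -?eq_sz ?ltn_ord //; case: eqP => [eq_yt|_]; last by rewrite mulr0.
by move: ne_ty; rewrite -val_eqE /= eq_yt eqxx.
Qed.

Lemma unit_col_mshuffle q r u v : u < q -> v < r ->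
  unit_col (mshuffle q r) (u * r + v) (v * q + u).
Proof.
move=> lt_uq lt_vr; have q_gt0 : 0 < q by apply: leq_ltn_trans lt_uq.
split; first by rewrite /= [q * r]mulnC mixed_lt.
move=> o /= lt_o; rewrite lt_o mixed_lt //=; congr (GRing.natmul 1 (nat_of_bool _)).
have lt_oq : o %/ q < r by rewrite ltn_divLR // mulnC.
apply/eqP/eqP => [eq_i | <-]; last by rewrite modnMD_small // divnMD_small.
have r_gt0 : 0 < r by apply: leq_ltn_trans lt_vr.
have eq_v : v = o %/ q.
  by move: (modnMD_small u lt_vr); rewrite eq_i modnMD_small.
have eq_u : u = o %% q.
  by move: (divnMD_small u r_gt0 lt_vr); rewrite eq_i divnMD_small.
by rewrite eq_u eq_v -divn_eq.
Qed.

Lemma unit_col_mkron_id a (G : smx R) u r y : u < a -> r < msz G ->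
  unit_col G r y -> unit_col (mkron_id a G) (u * msz G + r) (u * msz G + y).
Proof.
move=> lt_ua lt_r [lt_y colG]; have G_gt0 : 0 < msz G by apply: leq_ltn_trans lt_r.
split; first by rewrite /= mixed_lt.
move=> o /= lt_o; rewrite lt_o mixed_lt //= divnMD_small // modnMD_small //.
case: eqP => [eq_u | ne_u].
- by rewrite colG ?ltn_mod // {2}(divn_eq o (msz G)) eq_u eqn_add2l.
- by case: eqP => // eq_o; case: ne_u; rewrite -eq_o divnMD_small.
Qed.

Lemma msz_mbdiag (l : seq (smx R)) : msz (mbdiag l) = sumn (map (@msz R) l).
Proof. by elim: l => //= G l ->. Qed.

Lemma unit_col_mbdiag (l : seq (smx R)) G0 j r y : j < size l ->
  r < msz (nth G0 l j) -> unit_col (nth G0 l j) r y ->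
  let s := sumn (take j (map (@msz R) l)) in unit_col (mbdiag l) (s + r) (s + y).
Proof.
elim: l j => [|G l IH] [|j] //= lt_j lt_r colj.
- rewrite !add0n; have [lt_y colG] := colj; split; first exact: ltn_addr.
  move=> o lt_o /=; case: ifP => lt_oG; first by rewrite lt_r colG.
  rewrite leqNgt lt_r /=; case: eqP => // eq_yo.
  by move: lt_oG; rewrite -eq_yo lt_y.
- have [lt_y colD] := IH j lt_j lt_r colj.
  split; first by rewrite -addnA ltn_add2l.
  move=> o lt_o /=; rewrite -!addnA [msz G + _ < msz G]ltnNge leq_addr /=.
  case: ifP => lt_oG.
  + by case: eqP => // eq_o; move: lt_oG; rewrite -eq_o ltnNge leq_addr.
  + have le_Go : msz G <= o by rewrite leqNgt lt_oG.
    rewrite addKn colD; last by rewrite -(ltn_add2l (msz G)) subnKC.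
    by rewrite -[in RHS](subnKC le_Go) eqn_add2l.
Qed.

End UnitColumns.

Section Factors.
Variable R : pzRingType.
Variables (D : nat) (n : nat -> nat) (m : nat -> seq nat).
Hypothesis n_gt0 : forall l, l < D -> 0 < n l.
Hypothesis sumn_m : forall l, l < D -> sumn (m l) = n l.

Local Notation b := (bcount m).

Lemma msz_Gammaj k j : k <= D -> msz (Gammaj (R := R) n m k j) = Nprod n k * nth 0 (m k) j.
Proof.
move=> le_kD; rewrite /= msz_mbdiag -map_comp sumn_map_iota /= -big_distrl /=.
by rewrite -/(vol_before m k _) (vol_before_all n_gt0 sumn_m).
Qed.

Lemma unit_col_Gammaj h j off : is_index D n h -> size h < D -> j < b (size h) ->
  off < nth 0 (m (size h)) j ->
  unit_col (Gammaj (R := R) n m (size h) j) (posM m h + Nprod n (size h) * off)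
    (vol_before m (size h) (ivec b (blkidx m h)) * nth 0 (m (size h)) j
      + (off * vol m (blkidx m h) + local_pos m h)).
Proof.
move=> h_idx lt_hD lt_j lt_off.
set k := size h; set mj := nth 0 (m k) j; set beta := blkidx m h; set iv := ivec b beta.
have lt_iv : iv < Nprod b k by apply: (ivec_blkidx_lt sumn_m).
have lt_loc : local_pos m h < vol m beta by apply: (local_pos_lt sumn_m).
rewrite /Gammaj -/mj; set L := [seq mshuffle _ mj | t <- _].
have size_L : msz (mbdiag L) = mj * Nprod n k.
  by have := msz_Gammaj j (ltnW lt_hD); rewrite /= mulnC => ->.
apply: (@unit_col_mmul _ _ _ _ (posM m h * mj + off)); first by rewrite size_L.
  by rewrite addnC [_ * off]mulnC; apply: unit_col_mshuffle; last exact: (posM_lt n_gt0 sumn_m).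
have offset_iv : sumn (take iv (map (@msz R) L)) = vol_before m k iv * mj.
  by rewrite -map_comp sumn_take_iota ?(ltnW lt_iv) //= -big_distrl.
have block_iv : nth (mid 0) L iv = mshuffle (vol m beta) mj.
  by rewrite (nth_map 0) ?size_iota // nth_iota // add0n (vol_idecode_blkidx sumn_m).
have col_block : unit_col (mshuffle (R := R) (vol m beta) mj) (local_pos m h * mj + off)
    (off * vol m beta + local_pos m h) by apply: unit_col_mshuffle.
rewrite -block_iv in col_block.
have := @unit_col_mbdiag R L (mid 0) iv _ _ _ _ col_block.
rewrite block_iv offset_iv posME mulnDl -addnA; apply.
- by rewrite size_map size_iota.
- exact: mixed_lt.
Qed.

Lemma msz_Gamma k : k < D -> msz (Gamma (R := R) n m k) = Nprod n k.+1.
Proof.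
move=> lt_kD; rewrite /Gamma msz_mbdiag -map_comp sumn_map_iota /=.
under eq_bigr => j _ do rewrite msz_Gammaj ?(ltnW lt_kD) //.
by rewrite -big_distrr /= -sumn_take take_size sumn_m // NprodS.
Qed.

Lemma unit_col_Gamma h x : is_index D n h -> size h < D -> x < n (size h) ->
  unit_col (Gamma (R := R) n m (size h)) (posM m h + Nprod n (size h) * x)
    (posM m (rcons h x)).
Proof.
move=> h_idx lt_hD lt_x; rewrite (posM_rcons n_gt0 sumn_m) //.
set k := size h; set j := (blk (m k) x).1; set off := (blk (m k) x).2.
have [lt_j lt_off eq_x] : _ := @blk_spec (m k) x ltac:(by rewrite sumn_m).
rewrite /Gamma; set LG := [seq Gammaj n m k _ | _ <- _].
have offset_j : sumn (take j (map (@msz R) LG)) = Nprod n k * sumn (take j (m k)).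
  rewrite -map_comp sumn_take_iota ?(ltnW lt_j) // sumn_take big_distrr /=.
  by apply: eq_bigr => j' _; rewrite msz_Gammaj // ltnW.
have block_j : nth (mid 0) LG j = Gammaj n m k j.
  by rewrite (nth_map 0) ?size_iota // nth_iota.
have col_block := unit_col_Gammaj h_idx lt_hD lt_j lt_off.
rewrite -block_j in col_block.
rewrite [X in _ + _ * X]eq_x mulnDr addnCA.
have := @unit_col_mbdiag R LG (mid 0) j _ _ _ _ col_block.
rewrite block_j offset_j; apply.
- by rewrite size_map size_iota.
- rewrite msz_Gammaj ?(ltnW lt_hD) // addnC mulnC [Nprod n k * _]mulnC.
  by rewrite mixed_lt // (posM_lt n_gt0 sumn_m).
Qed.

Lemma msz_Qk k : k < D -> msz (Qk (R := R) D n m k) = Nprod n D.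
Proof.
by move=> lt_kD; rewrite /Qk; case: eqP => //= _; rewrite msz_Gamma // (Nprod_split n lt_kD).
Qed.

(* After [Q_k ... Q_1], entry [i] of [vec A] sits at the position it has in the
   [vec_(M_k)] of its mode-[(k+1 .. d)] slice, shifted by the slice offset. *)
Definition stage k i := posM m (idecode n k i) + Nprod n k * (i %/ Nprod n k).

Lemma stage1 i : 0 < D -> stage 1 i = i.
Proof.
move=> D_gt0; rewrite /stage idecodeS /= NprodS !Nprod0 mul1n divn1 -/(rcons [::] _).
rewrite (posM_singleton n_gt0 sumn_m) ?ltn_mod ?n_gt0 //.
by rewrite addnC mulnC -divn_eq.
Qed.

Lemma unit_col_Qk k i : 0 < k -> k < D -> i < Nprod n D ->
  unit_col (Qk (R := R) D n m k) (stage k i) (stage k.+1 i).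
Proof.
move=> k_gt0 lt_kD lt_i.
have Nk_gt0 : 0 < Nprod n k.+1.
  by apply: Nprod_gt0 => l lt_l; apply/n_gt0/(leq_trans lt_l).
set h := idecode n k i; set q := i %/ Nprod n k; set x := q %% n k.
have h_idx : is_index D n h by apply/is_index_idecode/ltnW.
have lt_x : x < n k by rewrite ltn_mod n_gt0.
have lt_h : posM m h < Nprod n k by have := posM_lt n_gt0 sumn_m h_idx; rewrite size_idecode.
have -> : stage k i = q %/ n k * Nprod n k.+1 + (posM m h + Nprod n k * x).
  rewrite /stage -/h -/q {1}(divn_eq q (n k)) NprodS mulnDr addnCA.
  by rewrite mulnCA mulnC.
have -> : stage k.+1 i = q %/ n k * Nprod n k.+1 + posM m (rcons h x).
  by rewrite /stage idecodeS -/h -/q -/x [X in i %/ X]NprodS divnMA -/q addnC mulnC.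
rewrite /Qk (negbTE (lt0n_neq0 k_gt0)) -(msz_Gamma lt_kD).
apply: unit_col_mkron_id.
- by rewrite /q -divnMA -NprodS ltn_divLR // -(Nprod_split n lt_kD).
- by rewrite msz_Gamma // NprodS addnC [Nprod n k * x]mulnC [_ * n k]mulnC mixed_lt.
- by have := unit_col_Gamma h_idx; rewrite size_idecode; apply.
Qed.

Lemma msz_prodQ k : 0 < k -> k <= D -> msz (prodQ (R := R) D n m k) = Nprod n D.
Proof. by case: k => [|[|k]] // _ lt_kD; apply: msz_Qk. Qed.

Lemma unit_col_prodQ k i : 0 < k -> k <= D -> i < Nprod n D ->
  unit_col (prodQ (R := R) D n m k) i (stage k i).
Proof.
elim: k => [|[|k] IH] // _ le_kD lt_i.
  by rewrite stage1 //; apply: unit_col_mid.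
apply: (unit_col_mmul _ (IH isT (ltnW le_kD) lt_i)); last exact: unit_col_Qk.
by rewrite msz_Qk // msz_prodQ // ltnW.
Qed.

End Factors.

Local Open Scope ring_scope.

Theorem theorem3p1 (R : realFieldType) (d : nat) (n : nat -> nat)
    (m : nat -> seq nat) (A : seq nat -> R) :
  (0 < d)%N ->
  (forall k, (k < d)%N -> (0 < n k)%N) ->
  (forall k, (k < d)%N -> all (fun x => 0 < x)%N (m k) /\ sumn (m k) = n k) ->
  tvecM d n m A = tomx (Nprod n d) (PM d n m) *m tvec d n A.
Proof.
move=> d_gt0 n_gt0 blocking.
have sumn_m l : (l < d)%N -> sumn (m l) = n l by move=> /blocking [].
apply/matrixP => o z; rewrite !mxE; apply: eq_bigr => i _; rewrite !mxE.
have [_ col_i] := unit_col_prodQ R n_gt0 sumn_m d_gt0 (leqnn d) (ltn_ord i).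
by rewrite col_i ?msz_prodQ // /stage divn_small // muln0 addn0.
Qed.
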